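(* Let $n \ge 3$ and let $x_1, \dots, x_n \in \mathbb{R}$ be pairwise distinct. Let $\mathbb{H} = \{\theta \in \mathbb{C} : \Im\theta > 0\}$, $h(\theta) = \prod_{j=1}^n (x_j - \theta)$, $q(\theta) = \theta - n\,\frac{h(\theta)}{h'(\theta)}$, and $Q(\theta) = q(q(\theta))$ for $\theta \in \mathbb{H}$ (this is a holomorphic map $\mathbb{H} \to \mathbb{H}$). Let $\hat\theta \in \mathbb{H}$ be the maximum likelihood estimate of the sample, i.e. the maximizer over $\mathbb{H}$ of $L(\theta) = \prod_{j=1}^n \frac{\Im\theta}{\pi\left((x_j - \Re\theta)^2 + (\Im\theta)^2\right)}$. Then: (i) the equation $z = Q(z)$ has a unique solution in $\mathbb{H}$, and it equals $\hat\theta$; (ii) this unique solution $\hat\theta$ of $z = Q(z)$ in $\mathbb{H}$ is a fixed point of $Q$; (iii) for every $z \in \mathbb{H}$, $\lim_{m\to\infty} Q^m(z) = \hat\theta$, where $Q^m$ denotes the $m$-fold iterate of $Q$, and this convergence is exponentially fast, i.e. there exist $C > 0$ and $r \in (0,1)$ (depending on $z$ and the sample) with $|Q^m(z) - \hat\theta| \le C r^m$ for all $m$.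
   Context: The Cauchy distribution $C(\theta)$ with $\theta = \mu + i\sigma \in \mathbb{H}$ ($\mu \in \mathbb{R}$, $\sigma>0$) has density $f(x;\theta) = \frac{\sigma}{\pi}\frac{1}{(x-\mu)^2+\sigma^2}$ on $\mathbb{R}$. The likelihood of the sample is $L(\theta) = \prod_{j=1}^n f(x_j;\theta)$; for $n \ge 3$ distinct observations its maximizer over $\mathbb{H}$ exists and is unique, and it is called the maximum likelihood estimate $\hat\theta$. Since the $x_j$ are distinct, all zeros of $h'$ are real, so $q$ is defined on $\mathbb{H}$; $q$ maps $\mathbb{H}$ into the lower half-plane and the lower half-plane into $\mathbb{H}$. *)

From HB Require Import structures.
From mathcomp Require Import all_boot all_order all_algebra.
From mathcomp Require Import complex.
From mathcomp Require Import all_classical all_reals all_analysis.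
Set Implicit Arguments. Unset Strict Implicit. Unset Printing Implicit Defensive.
Import Order.TTheory GRing.Theory Num.Theory ComplexField.
Local Open Scope ring_scope.
Local Open Scope complex_scope.

Section Cauchy.
Variable R : realType.
Variable n : nat.
Variable x : 'I_n -> R.

Definition inH (t : R[i]) : Prop := 0 < complex.Im t.

Definition hpoly : {poly R[i]} := \prod_(j < n) ((x j)%:C%:P - 'X).

Definition qmap (t : R[i]) : R[i] :=
  t - n%:R * hpoly.[t] / (hpoly^`()).[t].

Definition Qmap (t : R[i]) : R[i] := qmap (qmap t).

Definition lik (t : R[i]) : R :=
  \prod_(j < n) (complex.Im t / (pi * ((x j - complex.Re t) ^+ 2 + (complex.Im t) ^+ 2))).

Definition is_mle (th : R[i]) : Prop :=
  inH th /\ forall t, inH t -> lik t <= lik th.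

End Cauchy.

From HB Require Import structures.
From mathcomp Require Import all_boot all_order all_algebra.
From mathcomp Require Import complex.
From mathcomp Require Import all_classical all_reals all_analysis.
From mathcomp Require Import ring lra.

Set Implicit Arguments.
Unset Strict Implicit.
Unset Printing Implicit Defensive.

Import Order.TTheory GRing.Theory Num.Theory ComplexField numFieldNormedType.Exports.
Local Open Scope ring_scope.
Local Open Scope complex_scope.
Local Open Scope classical_set_scope.

(* Write [u_k z = 1 / (z - x_k)] and let [E], [V] and [C] be the empirical mean,
   variance and covariance of the [u_k].  Then [q z = z - 1 / E z], and for
   [rho a b = |a - b|^2 / (Im a Im b)]
     [rho (q z) (q w) = rho z w * |C z w|^2 / (V z * V w) <= rho z w]
   by Cauchy-Schwarz.  The likelihood equations at the MLE say exactly that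
   [E th = - i / (2 Im th)], i.e. [q th = conj th], hence [Q th = th].  The
   Cauchy-Schwarz defect is a sum of [|r (x_k)|^2] for a rational function [r]
   whose values at three distinct sample points determine [conj w - z] by
   Lagrange interpolation.  On every [rho]-ball around the MLE this bounds the
   contraction ratio of [Q] away from [1], which gives uniqueness of the fixed
   point and geometric convergence of the iterates. *)

Lemma horner_deriv_prod (F : fieldType) (I : Type) (s : seq I) (P : I -> {poly F}) (c : F) :
  (forall i, (P i).[c] != 0) ->
  (\prod_(i <- s) P i)^`().[c] =
    (\prod_(i <- s) P i).[c] * \sum_(i <- s) (P i)^`().[c] / (P i).[c].
Proof.
move=> P_neq0; elim: s => [|i s IHs]; first by rewrite !big_nil derivC !horner0 mulr0.
by rewrite !big_cons derivM hornerD !hornerM IHs; field; apply: P_neq0.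
Qed.

Lemma deriv_horner_eq0_at_min (R : realType) (p : {poly R}) (a b c : R) :
  a < c < b -> (forall t, a < t < b -> p.[c] <= p.[t]) -> p^`().[c] = 0.
Proof.
move=> /andP[ac cb] c_min.
have min_c : is_derive c (1 : R) (horner p) 0.
  apply: (@derive1_at_min R (horner p) a b c).
  - exact/ltW/(lt_trans ac).
  - by move=> t _; apply: derivable_horner.
  - by rewrite in_itv /= ac cb.
  - by move=> t; rewrite in_itv /=; apply: c_min.
by rewrite -(@derive_val _ _ _ _ _ _ _ min_c) (@derive_val _ _ _ _ _ _ _ (is_derive_poly p c)).
Qed.

Lemma cvg_geometric_bound (R : realType) (u : nat -> R) (C r : R) :
  0 <= r < 1 -> (forall m, 0 <= u m <= C * r ^+ m) -> u @ \oo --> 0.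
Proof.
move=> /andP[r_ge0 r_lt1] u_bound.
apply: (@squeeze_cvgr _ _ _ _ (fun=> 0) (fun m => C * r ^+ m)).
- exact: nearW.
- exact: cvg_cst.
- rewrite -(mulr0 C); apply: cvgM; first exact: cvg_cst.
  by apply: cvg_expr; rewrite ger0_norm.
Qed.

Lemma sqrt_geometric_bound (R : rcfType) (u : nat -> R) (B q : R) :
  0 <= B -> 0 < q < 1 -> (forall m, u m <= B * q ^+ m) ->
  exists C r : R, 0 < C /\ 0 < r < 1 /\ forall m, Num.sqrt (u m) <= C * r ^+ m.
Proof.
move=> B_ge0 /andP[q_gt0 q_lt1] u_le; exists (Num.sqrt B + 1), (Num.sqrt q).
split; first by rewrite ltr_pwDr ?sqrtr_ge0.
split; first by rewrite sqrtr_gt0 q_gt0 /= -sqrtr1 ltr_sqrt.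
have sqrtrX m : Num.sqrt (q ^+ m) = Num.sqrt q ^+ m.
  by elim: m => [|m IHm]; rewrite ?sqrtr1 // !exprS sqrtrM ?ltW // IHm.
move=> m; apply: le_trans (ler_wsqrtr (u_le m)) _.
by rewrite sqrtrM // sqrtrX ler_wpM2r ?exprn_ge0 ?sqrtr_ge0 // lerDl.
Qed.

Section SquaredModulus.
Variable R : rcfType.
Implicit Types (z w : R[i]) (r : R).

Definition sqnormc z : R := complex.Re z ^+ 2 + complex.Im z ^+ 2.

Lemma normc_sqnormc z : Normc.normc z = Num.sqrt (sqnormc z).
Proof. by case: z. Qed.

Lemma sqnormc_ge0 z : 0 <= sqnormc z.
Proof. by rewrite addr_ge0 ?sqr_ge0. Qed.

Lemma sqnormc_eq0 z : (sqnormc z == 0) = (z == 0).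
Proof.
case: z => a b; rewrite /sqnormc paddr_eq0 ?sqr_ge0 // !sqrf_eq0.
by rewrite eq_complex.
Qed.

Lemma sqnormc_gt0 z : z != 0 -> 0 < sqnormc z.
Proof. by rewrite lt_def sqnormc_eq0 sqnormc_ge0 andbT. Qed.

Lemma sqnormcM z w : sqnormc (z * w) = sqnormc z * sqnormc w.
Proof. by case: z => a b; case: w => c d; rewrite /sqnormc /=; ring. Qed.

Lemma mulcJ z : z * conjc z = (sqnormc z)%:C.
Proof. by case: z => a b; rewrite /sqnormc /=; congr (_ +i* _); ring. Qed.

Lemma ReV z : complex.Re z^-1 = complex.Re z / sqnormc z.
Proof. by case: z. Qed.

Lemma ImV z : complex.Im z^-1 = - complex.Im z / sqnormc z.
Proof. by case: z => a b; rewrite /= mulNr. Qed.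

Lemma sqnormcV z : sqnormc z^-1 = (sqnormc z)^-1.
Proof.
rewrite {1}/sqnormc ReV ImV.
have [->|z_neq0] := eqVneq (sqnormc z) 0; first by rewrite invr0 !mulr0 expr0n /= addr0.
by move: z_neq0; rewrite /sqnormc => ?; field.
Qed.

Lemma sqnormcN z : sqnormc (- z) = sqnormc z.
Proof. by rewrite /sqnormc !raddfN /= !sqrrN. Qed.

Lemma sqnormcJ z : sqnormc (conjc z) = sqnormc z.
Proof. by case: z => a b; rewrite /sqnormc /= sqrrN. Qed.

Lemma ReJ z : complex.Re (conjc z) = complex.Re z.
Proof. by case: z. Qed.

Lemma ImJ z : complex.Im (conjc z) = - complex.Im z.
Proof. by case: z. Qed.

Lemma sqnormc_real r : sqnormc r%:C = r ^+ 2.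
Proof. by rewrite /sqnormc /= expr0n /= addr0. Qed.

Lemma sqr_Im_le_sqnormc z : complex.Im z ^+ 2 <= sqnormc z.
Proof. by rewrite lerDr sqr_ge0. Qed.

Lemma sqnormc_gt0_Im z : complex.Im z != 0 -> 0 < sqnormc z.
Proof. by move=> Im_neq0; apply: sqnormc_gt0; apply: contraNneq Im_neq0 => ->. Qed.

Lemma subC_real_neq0 z r : complex.Im z != 0 -> z - r%:C != 0.
Proof. by move=> Im_neq0; apply: contraNneq Im_neq0 => /subr0_eq ->. Qed.

Lemma sqnormcD_le z w : sqnormc (z + w) <= 2 * sqnormc z + 2 * sqnormc w.
Proof.
case: z => a b; case: w => c d; rewrite /sqnormc /=.
have := sqr_ge0 (a - c); have := sqr_ge0 (b - d); nra.
Qed.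

Lemma sqnormcD3_le z1 z2 z3 :
  sqnormc (z1 + z2 + z3) <= 3 * (sqnormc z1 + sqnormc z2 + sqnormc z3).
Proof.
have sqrD3 (a b c : R) : (a + b + c) ^+ 2 <= 3 * (a ^+ 2 + b ^+ 2 + c ^+ 2).
  have := sqr_ge0 (a - b); have := sqr_ge0 (a - c); have := sqr_ge0 (b - c); nra.
case: z1 => a1 b1; case: z2 => a2 b2; case: z3 => a3 b3; rewrite /sqnormc /=.
by have := sqrD3 a1 a2 a3; have := sqrD3 b1 b2 b3; lra.
Qed.

Lemma ReM_real z r : complex.Re (z * r%:C) = complex.Re z * r.
Proof. by case: z => a b /=; rewrite mulr0 subr0. Qed.

Lemma ImM_real z r : complex.Im (z * r%:C) = complex.Im z * r.
Proof. by case: z => a b /=; rewrite mulr0 add0r. Qed.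

(* For [z], [w] in the same half-plane, [hrho z w = 2 (cosh d - 1)] where [d]
   is their hyperbolic distance. *)
Definition hrho z w : R := sqnormc (z - w) / (complex.Im z * complex.Im w).

Lemma hrho_ge0 z w : 0 < complex.Im z * complex.Im w -> 0 <= hrho z w.
Proof. by move=> Im_gt0; rewrite divr_ge0 ?sqnormc_ge0 ?ltW. Qed.

Lemma hrho_eq0 z w : 0 < complex.Im z * complex.Im w -> (hrho z w == 0) = (z == w).
Proof.
by move=> Im_gt0; rewrite /hrho mulf_eq0 invr_eq0 (gt_eqF Im_gt0) orbF sqnormc_eq0 subr_eq0.
Qed.

(* Complex Cauchy-Schwarz with its exact defect: the residual of [p] after
   projecting on the conjugate of [s]. *)
Lemma cauchy_schwarz_defect (I : finType) (p s : I -> R[i]) :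
  let S := \sum_i sqnormc (s i) in let A := \sum_i p i * s i in
  S != 0 ->
  (\sum_i sqnormc (p i - A * S^-1%:C * conjc (s i))) * S =
    (\sum_i sqnormc (p i)) * S - sqnormc A.
Proof.
move=> S A S_neq0; set l := A * S^-1%:C.
have expand i : sqnormc (p i - l * conjc (s i)) =
    sqnormc (p i) - 2 * complex.Re (conjc l * (p i * s i)) + sqnormc l * sqnormc (s i).
  by case: (p i) => a b; case: (s i) => c d; case: l => e f; rewrite /sqnormc /=; ring.
rewrite (eq_bigr _ (fun i _ => expand i)) big_split big_split /= sumrN.
rewrite -mulr_sumr -mulr_sumr -/S.
have -> : \sum_i complex.Re (conjc l * (p i * s i)) = sqnormc A / S.
  rewrite -raddf_sum -mulr_sumr -/A /l.
  by case: (A) => a b; rewrite /sqnormc /=; ring.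
by rewrite /l sqnormcM sqnormc_real exprVn; field.
Qed.

End SquaredModulus.

Section LagrangeThreeNodes.
Variables (R : rcfType) (a0 a1 a2 : R).
Implicit Types (z W l c : R[i]) (a b d : R).

Definition lagrange_term z W a b d : R[i] :=
  (z - a%:C) * (W - a%:C) * ((z - b%:C) * (z - d%:C) / ((a%:C - b%:C) * (a%:C - d%:C))).

Definition lagrange_weight z W : R :=
  sqnormc (lagrange_term z W a0 a1 a2) + sqnormc (lagrange_term z W a1 a0 a2)
  + sqnormc (lagrange_term z W a2 a0 a1).

Lemma lagrange_weight_ge0 z W : 0 <= lagrange_weight z W.
Proof. by apply: addr_ge0; [apply: addr_ge0|]; apply: sqnormc_ge0. Qed.

Definition lagrange_const : R :=
  ((a0 - a1) ^+ 2 * (a0 - a2) ^+ 2)^-1 + ((a1 - a0) ^+ 2 * (a1 - a2) ^+ 2)^-1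
  + ((a2 - a0) ^+ 2 * (a2 - a1) ^+ 2)^-1.

Definition two_pole z W l c a : R[i] := (z - a%:C)^-1 - l * (W - a%:C)^-1 - c.

Hypotheses (a01 : a0 != a1) (a02 : a0 != a2) (a12 : a1 != a2).

Let subC_neq0 a b : a != b -> a%:C - b%:C != 0 :> R[i].
Proof. by move=> ab; rewrite -rmorphB /= (inj_eq (@complexI R)) subr_eq0. Qed.

Lemma lagrange_const_gt0 : 0 < lagrange_const.
Proof.
have sqr_gt0 a b : a != b -> 0 < (a - b) ^+ 2 by move=> ab; rewrite exprn_even_gt0 // subr_eq0.
by rewrite !addr_gt0 // invr_gt0 mulr_gt0 // sqr_gt0 // eq_sym.
Qed.

(* [two_pole z W l c a * (z - a) * (W - a)] is a quadratic polynomial in [a]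
   whose value at [a = z] is [W - z]: expand it in the Lagrange basis of the
   nodes [a0, a1, a2] and evaluate at [z]. *)
Lemma lagrange_two_pole z W l c : complex.Im z != 0 -> complex.Im W != 0 ->
  W - z = two_pole z W l c a0 * lagrange_term z W a0 a1 a2
        + two_pole z W l c a1 * lagrange_term z W a1 a0 a2
        + two_pole z W l c a2 * lagrange_term z W a2 a0 a1.
Proof.
move=> Imz ImW; rewrite /two_pole /lagrange_term.
have a10 : a1 != a0 by rewrite eq_sym.
have a20 : a2 != a0 by rewrite eq_sym.
have a21 : a2 != a1 by rewrite eq_sym.
by field; do ![apply/andP; split]; by [apply: subC_neq0 | apply: subC_real_neq0].
Qed.

Lemma sqnormc_sub_le_two_pole z W l c : complex.Im z != 0 -> complex.Im W != 0 ->
  sqnormc (W - z) <=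
    3 * (sqnormc (two_pole z W l c a0) + sqnormc (two_pole z W l c a1)
         + sqnormc (two_pole z W l c a2)) * lagrange_weight z W.
Proof.
move=> Imz ImW; rewrite (lagrange_two_pole l c Imz ImW) /lagrange_weight.
apply: le_trans (sqnormcD3_le _ _ _) _.
rewrite !(sqnormcM (two_pole _ _ _ _ _)) -mulrA ler_pM2l //.
have cross (r0 r1 r2 b0 b1 b2 : R) : 0 <= r0 -> 0 <= r1 -> 0 <= r2 ->
    0 <= b0 -> 0 <= b1 -> 0 <= b2 ->
    r0 * b0 + r1 * b1 + r2 * b2 <= (r0 + r1 + r2) * (b0 + b1 + b2).
  move=> *; have : 0 <= r0 * (b1 + b2) + r1 * (b0 + b2) + r2 * (b0 + b1).
    by rewrite !addr_ge0 // mulr_ge0 // addr_ge0.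
  by move=> ?; nra.
by apply: cross; apply: sqnormc_ge0.
Qed.

Lemma lagrange_weight_le z W M :
  (forall a, a \in [:: a0; a1; a2] -> sqnormc (z - a%:C) <= M /\ sqnormc (W - a%:C) <= M) ->
  lagrange_weight z W <= M ^+ 4 * lagrange_const.
Proof.
move=> near_nodes.
have M_ge0 : 0 <= M.
  by have [+ _] := near_nodes a0 (mem_head _ _); apply: le_trans; apply: sqnormc_ge0.
have term_le a b d : a \in [:: a0; a1; a2] -> b \in [:: a0; a1; a2] ->
    d \in [:: a0; a1; a2] -> a != b -> a != d ->
    sqnormc (lagrange_term z W a b d) <= M ^+ 4 * ((a - b) ^+ 2 * (a - d) ^+ 2)^-1.
  move=> /near_nodes[za Wa] /near_nodes[zb _] /near_nodes[zd _] ab ad.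
  rewrite /lagrange_term !sqnormcM sqnormcV sqnormcM -!rmorphB /= !sqnormc_real.
  have den_ge0 : 0 <= ((a - b) ^+ 2 * (a - d) ^+ 2)^-1 by rewrite invr_ge0 mulr_ge0 ?sqr_ge0.
  have -> : M ^+ 4 * ((a - b) ^+ 2 * (a - d) ^+ 2)^-1 =
      M * M * (M * M * ((a - b) ^+ 2 * (a - d) ^+ 2)^-1) by ring.
  apply: ler_pM; rewrite ?mulr_ge0 ?sqnormc_ge0 //; first by apply: ler_pM; rewrite ?sqnormc_ge0.
  by apply: ler_wpM2r => //; apply: ler_pM; rewrite ?sqnormc_ge0.
rewrite /lagrange_weight /lagrange_const !mulrDr.
by rewrite !lerD // term_le ?inE ?eqxx ?orbT // eq_sym.
Qed.

End LagrangeThreeNodes.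

Lemma sum_centered_mul (F : comRingType) (I : finType) (f g : I -> F) (a b : F) :
  \sum_i f i = #|I|%:R * a -> \sum_i g i = #|I|%:R * b ->
  \sum_i (f i - a) * (g i - b) = \sum_i f i * g i - #|I|%:R * (a * b).
Proof.
move=> sum_f sum_g.
have expand i : (f i - a) * (g i - b) = f i * g i - (b * f i + a * g i) + a * b by ring.
rewrite (eq_bigr _ (fun i _ => expand i)) !big_split /= sumrN big_split /=.
by rewrite -!mulr_sumr sum_f sum_g sumr_const -mulr_natl; ring.
Qed.

Section Resolvent.
Variables (R : realType) (n : nat) (x : 'I_n -> R).
Hypothesis n_gt0 : (0 < n)%N.
Implicit Types z w : R[i].

Definition resolvent z k : R[i] := (z - (x k)%:C)^-1.

Definition stieltjes z : R[i] := (\sum_k resolvent z k) / n%:R.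

Definition resolvent_var z : R := (\sum_k sqnormc (resolvent z k - stieltjes z)) / n%:R.

Definition resolvent_cov z w : R[i] :=
  (\sum_k (resolvent z k - stieltjes z) * (resolvent w k - stieltjes w)) / n%:R.

Let natC_neq0 : n%:R != 0 :> R[i].
Proof. by rewrite pnatr_eq0 -lt0n. Qed.

Let natR_gt0 : 0 < n%:R :> R.
Proof. by rewrite ltr0n. Qed.

Let natR_neq0 : n%:R != 0 :> R.
Proof. exact: lt0r_neq0. Qed.

Let natC : n%:R = (n%:R : R)%:C :> R[i].
Proof. by rewrite rmorph_nat. Qed.

Let divn_real w : w / n%:R = w * (n%:R^-1 : R)%:C.
Proof. by rewrite natC fmorphV. Qed.

Lemma sum_resolvent z : \sum_k resolvent z k = #|'I_n|%:R * stieltjes z.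
Proof. by rewrite card_ord mulrC divfK. Qed.

Lemma resolventJ z k : conjc (resolvent z k) = resolvent (conjc z) k.
Proof. by rewrite /resolvent conjc_inv rmorphB /= oppr0. Qed.

Lemma sqnormc_resolvent z k : sqnormc (resolvent z k) = (sqnormc (z - (x k)%:C))^-1.
Proof. exact: sqnormcV. Qed.

Lemma Im_stieltjes z :
  complex.Im (stieltjes z) = - complex.Im z * (\sum_k sqnormc (resolvent z k)) / n%:R.
Proof.
rewrite /stieltjes divn_real ImM_real raddf_sum; congr (_ * _); rewrite mulr_sumr.
by apply: eq_bigr => k _; rewrite /= ImV raddfB /= subr0 sqnormc_resolvent.
Qed.

Lemma stieltjes_neq0 z : complex.Im z != 0 -> stieltjes z != 0.
Proof.
move=> Im_neq0.
have S_gt0 : 0 < \sum_k sqnormc (resolvent z k).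
  rewrite (bigD1 (Ordinal n_gt0)) //= ltr_pwDl ?sumr_ge0 // => [|k _]; last exact: sqnormc_ge0.
  by rewrite sqnormc_gt0 // invr_eq0 subC_real_neq0.
apply: contraNneq Im_neq0 => /(congr1 (@complex.Im R)); rewrite Im_stieltjes /= => /eqP.
by rewrite !mulf_eq0 invr_eq0 (gt_eqF natR_gt0) (gt_eqF S_gt0) oppr_eq0 !orbF.
Qed.

Lemma qmapE z : complex.Im z != 0 -> qmap x z = z - (stieltjes z)^-1.
Proof.
move=> Im_neq0.
have factor_neq0 k : ((x k)%:C%:P - 'X).[z] != 0.
  by rewrite !hornerE -opprB oppr_eq0 subC_real_neq0.
have h_neq0 : (hpoly x).[z] != 0 by rewrite horner_prod; apply/prodf_neq0 => k _.
have dh : (hpoly x)^`().[z] = (hpoly x).[z] * \sum_k resolvent z k.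
  rewrite horner_deriv_prod //; congr (_ * _); apply: eq_bigr => k _.
  by rewrite derivB derivC derivX sub0r !hornerE mulN1r -invrN opprB.
have : stieltjes z != 0 := stieltjes_neq0 Im_neq0.
rewrite /qmap dh /stieltjes mulf_eq0 negb_or => /andP[sum_neq0 _].
by field; apply/and3P.
Qed.

Lemma resolvent_varE z :
  resolvent_var z = (\sum_k sqnormc (resolvent z k)) / n%:R - sqnormc (stieltjes z).
Proof.
have sum_conj : \sum_k conjc (resolvent z k) = #|'I_n|%:R * conjc (stieltjes z).
  by rewrite -rmorph_sum sum_resolvent rmorphM rmorph_nat.
have := sum_centered_mul (sum_resolvent z) sum_conj.
under eq_bigr => k _ do rewrite -rmorphB mulcJ.
under [X in _ = X - _]eq_bigr => k _ do rewrite mulcJ.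
rewrite mulcJ card_ord -!rmorph_sum natC -rmorphM -rmorphB => /complexI sum_var.
by rewrite /resolvent_var sum_var; field; rewrite lt0r_neq0.
Qed.

Lemma Im_qmap z : complex.Im z != 0 ->
  complex.Im (qmap x z) = - complex.Im z * resolvent_var z / sqnormc (stieltjes z).
Proof.
move=> Im_neq0; have E_gt0 := sqnormc_gt0 (stieltjes_neq0 Im_neq0).
rewrite qmapE // raddfB /= ImV Im_stieltjes resolvent_varE.
by field; rewrite !lt0r_neq0.
Qed.

Lemma resolvent_var_gt0 i j z : x i != x j -> complex.Im z != 0 -> 0 < resolvent_var z.
Proof.
move=> xij Im_neq0; rewrite divr_gt0 // lt_def sumr_ge0 ?andbT => [|k _]; last first.
  exact: sqnormc_ge0.
apply: contra xij => /eqP /(psumr_eq0P (fun k _ => sqnormc_ge0 _)) var_eq0.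
have at_mean k : resolvent z k = stieltjes z.
  by apply/eqP; rewrite -subr_eq0 -sqnormc_eq0 var_eq0.
have := at_mean i; rewrite -(at_mean j) => /invr_inj /addrI /oppr_inj /complexI ->.
exact: eqxx.
Qed.

Lemma resolvent_var_le z : complex.Im z != 0 -> resolvent_var z <= (complex.Im z ^+ 2)^-1.
Proof.
move=> Im_neq0; rewrite resolvent_varE lerBlDr.
apply: le_trans (_ : _ <= (complex.Im z ^+ 2)^-1) _; last by rewrite lerDl sqnormc_ge0.
rewrite ler_pdivrMr //.
have -> : (complex.Im z ^+ 2)^-1 * n%:R = \sum_(k < n) (complex.Im z ^+ 2)^-1.
  by rewrite sumr_const card_ord mulr_natr.
apply: ler_sum => k _; rewrite sqnormc_resolvent lef_pV2 ?posrE ?sqnormc_gt0_Im //.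
  by have := sqr_Im_le_sqnormc (z - (x k)%:C); rewrite raddfB /= subr0.
- by rewrite raddfB /= subr0.
- by rewrite exprn_even_gt0.
Qed.

Lemma resolvent_covE z w : resolvent_cov z w =
  (\sum_k resolvent z k * resolvent w k) / n%:R - stieltjes z * stieltjes w.
Proof.
rewrite /resolvent_cov (sum_centered_mul (sum_resolvent z) (sum_resolvent w)) card_ord.
by field.
Qed.

Lemma qmapB z w : complex.Im z != 0 -> complex.Im w != 0 ->
  qmap x z - qmap x w = - (z - w) * resolvent_cov z w / (stieltjes z * stieltjes w).
Proof.
move=> Imz Imw; rewrite !qmapE // resolvent_covE.
have resolventB k :
    resolvent w k = resolvent z k + (z - w) * (resolvent z k * resolvent w k).
  by rewrite /resolvent; field; rewrite !subC_real_neq0.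
have stieltjesB : stieltjes w =
    stieltjes z + (z - w) * ((\sum_k resolvent z k * resolvent w k) / n%:R).
  rewrite {1}/stieltjes (eq_bigr _ (fun k _ => resolventB k)) big_split /=.
  by rewrite -mulr_sumr /stieltjes; field.
have := stieltjes_neq0 Imz; have := stieltjes_neq0 Imw.
set P := (\sum_k _) / _ in stieltjesB *.
by rewrite stieltjesB => Ew Ez; field; apply/andP.
Qed.

Lemma stieltjesJ z : stieltjes (conjc z) = conjc (stieltjes z).
Proof.
rewrite /stieltjes rmorphM rmorph_sum /= fmorphV rmorph_nat.
by congr (_ * _); apply: eq_bigr => k _; rewrite resolventJ.
Qed.

Lemma qmapJ z : complex.Im z != 0 -> qmap x (conjc z) = conjc (qmap x z).
Proof.
move=> Im_neq0; have ImJ_neq0 : complex.Im (conjc z) != 0 by rewrite ImJ oppr_eq0.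
by rewrite !qmapE // rmorphB fmorphV stieltjesJ.
Qed.

Lemma sqnormc_conj_sub_gt0 z w :
  0 < complex.Im z * complex.Im w -> 0 < sqnormc (conjc w - z).
Proof.
move=> Im_gt0; apply: sqnormc_gt0_Im; rewrite raddfB /= ImJ -opprD oppr_eq0.
apply: contraTneq Im_gt0 => /eqP; rewrite addr_eq0 => /eqP ->.
by rewrite mulrN oppr_gt0 -leNgt -expr2 sqr_ge0.
Qed.

Lemma Im_mul_gt0_neq0 z w : 0 < complex.Im z * complex.Im w ->
  complex.Im z != 0 /\ complex.Im w != 0.
Proof. by move=> Im_gt0; split; apply: contraTneq Im_gt0 => ->; rewrite ?mul0r ?mulr0 ltxx. Qed.

Section ThreeNodes.
Hypotheses (n_gt2 : (2 < n)%N) (x_inj : injective x).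

Let i0 : 'I_n := Ordinal n_gt0.
Let i1 : 'I_n := Ordinal (ltnW n_gt2).
Let i2 : 'I_n := Ordinal n_gt2.

Let x01 : x i0 != x i1. Proof. by rewrite (inj_eq x_inj). Qed.
Let x02 : x i0 != x i2. Proof. by rewrite (inj_eq x_inj). Qed.
Let x12 : x i1 != x i2. Proof. by rewrite (inj_eq x_inj). Qed.

Definition node_weight z W : R := lagrange_weight (x i0) (x i1) (x i2) z W.

Let sum3_le (f : 'I_n -> R) : (forall k, 0 <= f k) -> f i0 + f i1 + f i2 <= \sum_k f k.
Proof.
move=> f_ge0; rewrite (bigD1 i0) // (bigD1 i1) //= (bigD1 i2) //= !addrA lerDl.
exact: sumr_ge0.
Qed.

Lemma resolvent_cov_defect z w : complex.Im z != 0 -> complex.Im w != 0 ->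
  resolvent_var w * sqnormc (conjc w - z) <=
  3 * n%:R * node_weight z (conjc w) *
    (resolvent_var z * resolvent_var w - sqnormc (resolvent_cov z w)).
Proof.
move=> Imz Imw; have ImJw : complex.Im (conjc w) != 0 by rewrite ImJ oppr_eq0.
pose p k := resolvent z k - stieltjes z; pose s k := resolvent w k - stieltjes w.
have sum_p : \sum_k sqnormc (p k) = n%:R * resolvent_var z.
  by rewrite /resolvent_var mulrC divfK ?lt0r_neq0.
have sum_s : \sum_k sqnormc (s k) = n%:R * resolvent_var w.
  by rewrite /resolvent_var mulrC divfK ?lt0r_neq0.
have sum_ps : \sum_k p k * s k = n%:R * resolvent_cov z w.
  by rewrite /resolvent_cov mulrC divfK.
have Vw_gt0 := resolvent_var_gt0 x01 Imw.
have S_neq0 : \sum_k sqnormc (s k) != 0 by rewrite sum_s mulf_neq0 ?lt0r_neq0.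
have := cauchy_schwarz_defect p S_neq0.
set l := _ * _%:C; set c := stieltjes z - l * conjc (stieltjes w).
have residual k : p k - l * conjc (s k) = two_pole z (conjc w) l c (x k).
  have -> : conjc (s k) = resolvent (conjc w) k - conjc (stieltjes w).
    by rewrite -resolventJ rmorphB.
  by rewrite /p /two_pole /c /resolvent; ring.
under eq_bigr do rewrite residual.
rewrite sum_p sum_s sum_ps sqnormcM natC sqnormc_real => gram.
have res_var : (\sum_k sqnormc (two_pole z (conjc w) l c (x k))) * resolvent_var w =
    n%:R * (resolvent_var z * resolvent_var w - sqnormc (resolvent_cov z w)).
  by apply: (mulfI (lt0r_neq0 natR_gt0)); rewrite mulrCA gram; ring.
have three_nodes := sqnormc_sub_le_two_pole x01 x02 x12 l c Imz ImJw.
have := sum3_le (fun k => sqnormc_ge0 (two_pole z (conjc w) l c (x k))).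
rewrite /node_weight -/(lagrange_weight _ _ _ z (conjc w)) in three_nodes *.
set T := _ + _ + _ in three_nodes *; set K := lagrange_weight _ _ _ _ _ in three_nodes *.
set Res := \sum_k _ in res_var * => T_le.
have K_ge0 : 0 <= K by apply: lagrange_weight_ge0.
have TK_le : resolvent_var w * (T * K) <= resolvent_var w * (Res * K).
  by rewrite ler_pM2l // ler_wpM2r.
have -> : 3 * n%:R * K * (resolvent_var z * resolvent_var w - sqnormc (resolvent_cov z w))
    = 3 * K * (Res * resolvent_var w) by rewrite res_var; ring.
nra.
Qed.

Lemma Im_qmap_mul_gt0 z w : 0 < complex.Im z * complex.Im w ->
  0 < complex.Im (qmap x z) * complex.Im (qmap x w).
Proof.
move=> Im_gt0; have [Imz Imw] := Im_mul_gt0_neq0 Im_gt0.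
rewrite !Im_qmap //.
have -> : forall a b c d e f : R, (- a * b / c) * (- d * e / f) = (a * d) * (b * e) / (c * f).
  by move=> *; rewrite invfM; ring.
have := resolvent_var_gt0 x01 Imz; have := resolvent_var_gt0 x01 Imw.
have := sqnormc_gt0 (stieltjes_neq0 Imz); have := sqnormc_gt0 (stieltjes_neq0 Imw).
by move=> *; apply: divr_gt0; apply: mulr_gt0 => //; apply: mulr_gt0.
Qed.

Lemma hrho_qmap z w : 0 < complex.Im z * complex.Im w ->
  hrho (qmap x z) (qmap x w) =
    hrho z w * (sqnormc (resolvent_cov z w) / (resolvent_var z * resolvent_var w)).
Proof.
move=> Im_gt0; have [Imz Imw] := Im_mul_gt0_neq0 Im_gt0.
have Vz0 := lt0r_neq0 (resolvent_var_gt0 x01 Imz).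
have Vw0 := lt0r_neq0 (resolvent_var_gt0 x01 Imw).
rewrite /hrho qmapB // !Im_qmap //.
move: (stieltjes z) (stieltjes w) (stieltjes_neq0 Imz) (stieltjes_neq0 Imw) => Ez Ew Ez0 Ew0.
move: (resolvent_cov z w) => C.
have Ez0' := lt0r_neq0 (sqnormc_gt0 Ez0); have Ew0' := lt0r_neq0 (sqnormc_gt0 Ew0).
rewrite !(sqnormcM, sqnormcN, sqnormcV).
by field; do ![apply/andP; split].
Qed.

Lemma node_weight_gt0 z w : 0 < complex.Im z * complex.Im w -> 0 < node_weight z (conjc w).
Proof.
move=> Im_gt0; have [Imz Imw] := Im_mul_gt0_neq0 Im_gt0.
have := resolvent_cov_defect Imz Imw.
rewrite lt_def lagrange_weight_ge0 andbT; apply: contraTneq => ->.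
by rewrite mulr0 mul0r -ltNge mulr_gt0 ?sqnormc_conj_sub_gt0 ?(resolvent_var_gt0 x01).
Qed.

Lemma hrho_qmap_le_contract z w : 0 < complex.Im z * complex.Im w ->
  hrho (qmap x z) (qmap x w) <=
    hrho z w * (1 - sqnormc (conjc w - z) / (3 * n%:R * node_weight z (conjc w) * resolvent_var z)).
Proof.
move=> Im_gt0; have [Imz Imw] := Im_mul_gt0_neq0 Im_gt0.
rewrite hrho_qmap //; apply: ler_wpM2l; first exact: hrho_ge0.
have defect := resolvent_cov_defect Imz Imw.
have d_gt0 := sqnormc_conj_sub_gt0 Im_gt0.
have Vz_gt0 := resolvent_var_gt0 x01 Imz; have Vw_gt0 := resolvent_var_gt0 x01 Imw.
set d := sqnormc _ in defect d_gt0 *; set K := node_weight _ _ in defect *.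
set C2 := sqnormc _ in defect *; have K_gt0 : 0 < K := node_weight_gt0 Im_gt0.
rewrite ler_pdivrMr ?(mulr_gt0 Vz_gt0 Vw_gt0) // mulrBl mul1r.
have nK_gt0 : 0 < 3 * n%:R * K by rewrite !mulr_gt0.
have -> : d / (3 * n%:R * K * resolvent_var z) * (resolvent_var z * resolvent_var w) =
    resolvent_var w * d / (3 * n%:R * K).
  by field; rewrite !lt0r_neq0.
by rewrite lerBrDr addrC -lerBrDr ler_pdivrMr // [X in _ <= X]mulrC.
Qed.

Lemma hrho_qmap_le z w : 0 < complex.Im z * complex.Im w ->
  hrho (qmap x z) (qmap x w) <= hrho z w.
Proof.
move=> Im_gt0; have [Imz _] := Im_mul_gt0_neq0 Im_gt0.
apply: le_trans (hrho_qmap_le_contract Im_gt0) _.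
rewrite ler_piMr ?hrho_ge0 // lerBlDr lerDl.
apply: divr_ge0; first exact: sqnormc_ge0.
apply: mulr_ge0; last exact/ltW/(resolvent_var_gt0 x01).
by apply: mulr_ge0; [rewrite mulr_ge0 ?ler0n | exact/ltW/node_weight_gt0].
Qed.

Section MaximumLikelihood.
Variable th : R[i].
Hypothesis th_mle : is_mle x th.

Let mu := complex.Re th.
Let sg := complex.Im th.
Let g j := sqnormc (th - (x j)%:C).

Let sg_gt0 : 0 < sg. Proof. by case: th_mle. Qed.

Let sg_neq0 : sg != 0. Proof. exact: lt0r_neq0. Qed.

Let gE j : g j = (x j - mu) ^+ 2 + sg ^+ 2.
Proof. by rewrite /g /sqnormc !raddfB /= subr0 -sqrrN opprB. Qed.

Let g_gt0 j : 0 < g j.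
Proof. by rewrite gE ltr_wpDl ?sqr_ge0 ?exprn_gt0. Qed.

Lemma mle_lik_le t : 0 < complex.Im t ->
  complex.Im t ^+ n * \prod_j g j <=
    sg ^+ n * \prod_j ((x j - complex.Re t) ^+ 2 + complex.Im t ^+ 2).
Proof.
move=> t_gt0; have [_ /(_ t t_gt0)] := th_mle.
have likE s : lik x s = complex.Im s ^+ n / (pi ^+ n *
    \prod_j ((x j - complex.Re s) ^+ 2 + complex.Im s ^+ 2)).
  by rewrite /lik big_split /= prodr_const card_ord prodfV big_split /= prodr_const card_ord.
have D_gt0 s : 0 < complex.Im s -> 0 < \prod_j ((x j - complex.Re s) ^+ 2 + complex.Im s ^+ 2).
  by move=> s_gt0; apply: prodr_gt0 => j _; rewrite ltr_wpDl ?sqr_ge0 ?exprn_gt0.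
have pi_n_gt0 : 0 < pi ^+ n :> R by rewrite exprn_gt0 ?pi_gt0.
rewrite !likE ler_pdivrMr ?mulr_gt0 ?D_gt0 // mulrAC ler_pdivlMr ?mulr_gt0 ?D_gt0 //.
by rewrite -(eq_bigr _ (fun j _ => gE j)) mulrCA [X in _ <= X]mulrCA ler_pM2l.
Qed.

(* Along the horizontal line [s |-> th + s] the likelihood is maximal at [s = 0]. *)
Lemma mle_location_eq : \sum_j (x j - mu) / g j = 0.
Proof.
pose P j : {poly R} := ((x j - mu)%:P - 'X) * ((x j - mu)%:P - 'X) + (sg ^+ 2)%:P.
have P_horner j s : (P j).[s] = (x j - (mu + s)) ^+ 2 + sg ^+ 2.
  by rewrite /P !hornerE; ring.
have P0 j : (P j).[0] = g j by rewrite P_horner addr0 gE.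
have P0_neq0 j : (P j).[0] != 0 by rewrite P0 lt0r_neq0.
have dP0 j : (P j)^`().[0] = -2 * (x j - mu).
  by rewrite /P !(derivD, derivM, derivN, derivC, derivX) !hornerE; ring.
have min0 s : (\prod_j P j).[0] <= (\prod_j P j).[s].
  rewrite !horner_prod (eq_bigr _ (fun j _ => P0 j)) (eq_bigr _ (fun j _ => P_horner j s)).
  by have := @mle_lik_le ((mu + s) +i* sg) sg_gt0; rewrite /= ler_pM2l ?exprn_gt0.
have prod0_neq0 : (\prod_j P j).[0] != 0 by rewrite horner_prod; apply/prodf_neq0 => j _.
have := @deriv_horner_eq0_at_min _ (\prod_j P j) (-1) 1 0.
rewrite ltrN10 ltr01 => /(_ isT (fun t _ => min0 t)).
rewrite horner_deriv_prod // => /eqP; rewrite mulf_eq0 (negbTE prod0_neq0) /= => /eqP.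
under eq_bigr do rewrite dP0 P0 -mulrA.
by rewrite -mulr_sumr => /eqP; rewrite mulf_eq0 oppr_eq0 pnatr_eq0 => /eqP.
Qed.

(* Along [s |-> Re th + i s Im th] maximality reads [G s^n <= \prod_j P j s],
   with equality at [s = 1]. *)
Lemma mle_scale_eq : \sum_j (g j)^-1 = n%:R / (2 * sg ^+ 2).
Proof.
pose P j : {poly R} := ((x j - mu) ^+ 2)%:P + (sg ^+ 2)%:P * ('X * 'X).
pose G := \prod_j g j.
pose Q := \prod_j P j - G%:P * 'X^n.
have P_horner j s : (P j).[s] = (x j - mu) ^+ 2 + (sg * s) ^+ 2.
  by rewrite /P !(hornerD, hornerM, hornerC, hornerX); ring.
have P1 j : (P j).[1] = g j by rewrite P_horner mulr1 gE.
have P1_neq0 j : (P j).[1] != 0 by rewrite P1 lt0r_neq0.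
have dP1 j : (P j)^`().[1] = 2 * sg ^+ 2.
  rewrite /P !(derivD, derivM, derivC, derivX).
  by rewrite !(hornerD, hornerM, hornerC, hornerX, horner0); ring.
have G_gt0 : 0 < G by apply: prodr_gt0 => j _.
have Q_horner s : Q.[s] = (\prod_j P j).[s] - G * s ^+ n by rewrite /Q !hornerE.
have min1 s : 0 < s < 2 -> Q.[1] <= Q.[s].
  case/andP=> s_gt0 _; rewrite !Q_horner !horner_prod (eq_bigr _ (fun j _ => P1 j)).
  rewrite (expr1n _ n) mulr1 subrr subr_ge0 (eq_bigr _ (fun j _ => P_horner j s)) mulrC.
  have := @mle_lik_le (mu +i* (sg * s)) (mulr_gt0 sg_gt0 s_gt0).
  by rewrite /= exprMn -mulrA ler_pM2l ?exprn_gt0.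
have := @deriv_horner_eq0_at_min _ Q 0 2 1; rewrite ltr01 ltr1n => /(_ isT min1).
rewrite /Q derivB derivM derivC mul0r add0r derivXn hornerD hornerN hornerM hornerC.
rewrite hornerMn hornerXn (expr1n _ n.-1) horner_deriv_prod // horner_prod.
rewrite (eq_bigr _ (fun j _ => P1 j)) -/G.
under eq_bigr do rewrite dP1 P1.
move/eqP; rewrite subr_eq0 -mulr_sumr mulr_natr => /eqP sum_eq.
have sg2_neq0 : 2 * sg ^+ 2 != 0 by rewrite lt0r_neq0 ?mulr_gt0 ?exprn_gt0.
apply: (mulfI (lt0r_neq0 G_gt0)); apply: (mulIf sg2_neq0).
by rewrite -[RHS]mulrA divfK // mulr_natr -sum_eq; ring.
Qed.

Lemma stieltjes_mle : stieltjes th = Complex 0 (- (2 * sg)^-1).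
Proof.
apply/eqP; rewrite eq_complex; apply/andP; split; apply/eqP.
  rewrite /stieltjes divn_real ReM_real raddf_sum /=.
  under eq_bigr do rewrite /resolvent ReV raddfB /= -opprB mulNr.
  by rewrite sumrN mle_location_eq oppr0 mul0r.
rewrite Im_stieltjes (eq_bigr _ (fun j _ => sqnormc_resolvent th j)) mle_scale_eq /= -/sg.
by field; apply/andP.
Qed.

Lemma qmap_mle : qmap x th = conjc th.
Proof.
rewrite qmapE // stieltjes_mle.
apply/eqP; rewrite eq_complex; apply/andP; split; apply/eqP.
  by rewrite raddfB /= mul0r subr0 ReJ.
by rewrite raddfB /= ImJ -/sg; field.
Qed.

Lemma qmap_conj_mle : qmap x (conjc th) = th.
Proof. by rewrite qmapJ // qmap_mle conjcK. Qed.

Lemma Qmap_mle : Qmap x th = th.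
Proof. by rewrite /Qmap qmap_mle qmap_conj_mle. Qed.

Lemma hrho_mle_ball z D : 0 <= D -> 0 < complex.Im z -> hrho z th <= D ->
  [/\ sg / (2 + D) <= complex.Im z, complex.Im z <= (2 + D) * sg &
      sqnormc (z - th) <= D * (2 + D) * sg ^+ 2].
Proof.
move=> D_ge0 z_gt0 z_near.
have dist_le : sqnormc (z - th) <= D * (complex.Im z * sg).
  by move: z_near; rewrite /hrho ler_pdivrMr ?mulr_gt0.
have Im_dist_le : (complex.Im z - sg) ^+ 2 <= sqnormc (z - th).
  by have := sqr_Im_le_sqnormc (z - th); rewrite raddfB.
have Im_le : complex.Im z <= (2 + D) * sg by nra.
have Im_ge : sg <= (2 + D) * complex.Im z by nra.
split => //; first by rewrite ler_pdivrMr ?ltr_wpDr // mulrC.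
apply: le_trans dist_le _; rewrite -mulrA ler_wpM2l // expr2 mulrA ler_wpM2r //.
exact: ltW.
Qed.

Let sqdist_bound D := 2 * (D * (2 + D) * sg ^+ 2) + 2 * \sum_k g k.

Lemma node_weight_mle_ball_le z D : 0 <= D -> 0 < complex.Im z -> hrho z th <= D ->
  node_weight z (conjc th) <= sqdist_bound D ^+ 4 * lagrange_const (x i0) (x i1) (x i2).
Proof.
move=> D_ge0 z_gt0 z_near; have [_ _ z_th] := hrho_mle_ball D_ge0 z_gt0 z_near.
have g_le_sum k : g k <= \sum_j g j.
  by rewrite (bigD1 k) //= lerDl sumr_ge0 // => j _; apply/ltW.
have near_k k : sqnormc (z - (x k)%:C) <= sqdist_bound D /\
    sqnormc (conjc th - (x k)%:C) <= sqdist_bound D.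
  have zth_ge0 : 0 <= D * (2 + D) * sg ^+ 2 by apply: le_trans z_th; apply: sqnormc_ge0.
  have := g_le_sum k; have := g_gt0 k; split; last first.
    by rewrite -conjc_real -rmorphB sqnormcJ -/(g k) /sqdist_bound; lra.
  rewrite -(subrK th z) -addrA; apply: le_trans (sqnormcD_le _ _) _.
  by rewrite -/(g k) /sqdist_bound; lra.
apply: (lagrange_weight_le x01 x02 x12) => a.
by rewrite !inE => /or3P[] /eqP ->; apply: near_k.
Qed.

Lemma resolvent_var_mle_ball_le z D : 0 <= D -> 0 < complex.Im z -> hrho z th <= D ->
  resolvent_var z <= ((2 + D) / sg) ^+ 2.
Proof.
move=> D_ge0 z_gt0 z_near; have [Im_ge _ _] := hrho_mle_ball D_ge0 z_gt0 z_near.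
apply: le_trans (resolvent_var_le (lt0r_neq0 z_gt0)) _.
rewrite -invf_div exprVn lef_pV2 ?posrE ?exprn_gt0 ?divr_gt0 ?ltr_wpDr //.
have : 0 <= sg / (2 + D) by apply: divr_ge0; [exact: ltW | rewrite addr_ge0].
by move: (ltW z_gt0) => *; rewrite ler_pXn2r ?nnegrE.
Qed.

Lemma qmap_mle_contraction D : 0 <= D -> exists2 eta : R, 0 < eta &
  forall z, 0 < complex.Im z -> hrho z th <= D ->
    hrho (qmap x z) (conjc th) <= (1 - eta) * hrho z th.
Proof.
move=> D_ge0; pose Kmax := sqdist_bound D ^+ 4 * lagrange_const (x i0) (x i1) (x i2).
pose Vmax := ((2 + D) / sg) ^+ 2.
have bound_gt0 : 0 < sqdist_bound D.
  have : 0 < \sum_k g k by rewrite (bigD1 i0) //= ltr_pwDl // sumr_ge0 // => k _; exact/ltW.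
  have : 0 <= D * (2 + D) * sg ^+ 2 by apply: mulr_ge0; [nra | exact: sqr_ge0].
  by rewrite /sqdist_bound; lra.
have Kmax_gt0 : 0 < Kmax := mulr_gt0 (exprn_gt0 _ bound_gt0) (lagrange_const_gt0 x01 x02 x12).
have Vmax_gt0 : 0 < Vmax by rewrite exprn_gt0 // divr_gt0 // ltr_wpDr.
have c_gt0 : 0 < 3 * n%:R :> R by rewrite mulr_gt0.
have den_max_gt0 : 0 < 3 * n%:R * Kmax * Vmax.
  exact: mulr_gt0 (mulr_gt0 c_gt0 Kmax_gt0) Vmax_gt0.
exists (sg ^+ 2 / (3 * n%:R * Kmax * Vmax)); first by rewrite divr_gt0 ?exprn_gt0.
move=> z z_gt0 z_near; have zth_gt0 : 0 < complex.Im z * sg by rewrite mulr_gt0.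
rewrite -[conjc th]qmap_mle; apply: le_trans (hrho_qmap_le_contract (w := th) zth_gt0) _.
rewrite mulrC ler_wpM2r ?hrho_ge0 // lerD2l lerN2.
have dist_ge : sg ^+ 2 <= sqnormc (conjc th - z).
  apply: le_trans (sqr_Im_le_sqnormc _); rewrite raddfB /= ImJ -/sg.
  by rewrite -opprD sqrrN; nra.
have K_gt0 := node_weight_gt0 zth_gt0.
have V_gt0 := resolvent_var_gt0 x01 (lt0r_neq0 z_gt0).
have den_gt0 : 0 < 3 * n%:R * node_weight z (conjc th) * resolvent_var z.
  exact: mulr_gt0 (mulr_gt0 c_gt0 K_gt0) V_gt0.
rewrite ler_pdivrMr // mulrAC ler_pdivlMr //.
apply: ler_pM; [exact: sqr_ge0 | exact: ltW | exact: dist_ge |].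
apply: ler_pM; [exact: mulr_ge0 (ltW c_gt0) (ltW K_gt0) | exact: ltW | |].
  by apply: ler_wpM2l; [exact: ltW | exact: node_weight_mle_ball_le D_ge0 z_gt0 z_near].
exact: resolvent_var_mle_ball_le D_ge0 z_gt0 z_near.
Qed.

Lemma Qmap_mle_contraction D : 0 <= D -> exists2 eta : R, 0 < eta < 1 &
  forall z, 0 < complex.Im z -> hrho z th <= D ->
    0 < complex.Im (Qmap x z) /\ hrho (Qmap x z) th <= (1 - eta) * hrho z th.
Proof.
move=> D_ge0; have [eta eta_gt0 contract] := qmap_mle_contraction D_ge0.
exists (Num.min eta (1 / 2)).
  by rewrite lt_min eta_gt0 divr_gt0 //= gt_min ltr_pdivrMr // mul1r ltr1n orbT.
move=> z z_gt0 z_near; have zth_gt0 : 0 < complex.Im z * complex.Im th by rewrite mulr_gt0.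
have qz_thJ : 0 < complex.Im (qmap x z) * complex.Im (conjc th).
  by rewrite -qmap_mle; apply: Im_qmap_mul_gt0.
have := Im_qmap_mul_gt0 qz_thJ; rewrite qmap_conj_mle -/(Qmap x z) => Qz_th_gt0.
split; first by move: Qz_th_gt0; rewrite pmulr_lgt0.
rewrite -[X in hrho _ X]qmap_conj_mle; apply: le_trans (hrho_qmap_le qz_thJ) _.
apply: le_trans (contract z z_gt0 z_near) _.
by rewrite ler_wpM2r ?hrho_ge0 // lerD2l lerN2 ge_min lexx.
Qed.

Lemma hrho_iter_Qmap_le z : 0 < complex.Im z -> exists2 eta : R, 0 < eta < 1 &
  forall m, 0 < complex.Im (iter m (Qmap x) z) /\
    hrho (iter m (Qmap x) z) th <= (1 - eta) ^+ m * hrho z th.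
Proof.
move=> z_gt0; have D_ge0 : 0 <= hrho z th by rewrite hrho_ge0 ?mulr_gt0.
have [eta eta01 contract] := Qmap_mle_contraction D_ge0.
have [eta_gt0 eta_lt1] := andP eta01.
have r_ge0 : 0 <= 1 - eta by rewrite subr_ge0 ltW.
have r_le1 : 1 - eta <= 1 by rewrite lerBlDr lerDl ltW.
exists eta => // m; elim: m => [|m [zm_gt0 zm_le]]; first by rewrite expr0 mul1r.
have zm_near : hrho (iter m (Qmap x) z) th <= hrho z th.
  by apply: le_trans zm_le _; rewrite ler_piMl // exprn_ile1.
have [Qzm_gt0 Qzm_le] := contract _ zm_gt0 zm_near.
split => //; apply: le_trans Qzm_le _.
by rewrite exprS -mulrA ler_wpM2l.
Qed.

Lemma Qmap_fixpoint_mle z : 0 < complex.Im z -> Qmap x z = z -> z = th.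
Proof.
move=> z_gt0 Qz; have zth_gt0 : 0 < complex.Im z * complex.Im th by rewrite mulr_gt0.
have [eta /andP[eta_gt0 _] contract] := Qmap_mle_contraction (hrho_ge0 zth_gt0).
have [_] := contract z z_gt0 (lexx _); rewrite Qz => le_contract.
apply/eqP; rewrite -(hrho_eq0 zth_gt0) eq_le hrho_ge0 // andbT.
by rewrite -(pmulr_rle0 _ eta_gt0); move: le_contract; rewrite mulrBl mul1r; lra.
Qed.

Lemma sqnormc_iter_Qmap_le z : 0 < complex.Im z -> exists B : R, 0 <= B /\
  exists2 r : R, 0 < r < 1 & forall m, sqnormc (iter m (Qmap x) z - th) <= B * r ^+ m.
Proof.
move=> z_gt0; set D := hrho z th.
have D_ge0 : 0 <= D by rewrite hrho_ge0 ?mulr_gt0.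
have [eta /andP[eta_gt0 eta_lt1] iter_le] := hrho_iter_Qmap_le z_gt0.
have r_ge0 : 0 <= 1 - eta by rewrite subr_ge0 ltW.
have r_le1 : 1 - eta <= 1 by rewrite lerBlDr lerDl ltW.
exists (D * (2 + D) * sg ^+ 2); split; first by apply: mulr_ge0; [nra | exact: sqr_ge0].
exists (1 - eta); first by rewrite subr_gt0 eta_lt1 ltrBlDr ltrDl.
move=> m; have [zm_gt0 zm_le] := iter_le m.
have rm_ge0 : 0 <= (1 - eta) ^+ m := exprn_ge0 _ r_ge0.
have zm_near : hrho (iter m (Qmap x) z) th <= D.
  by apply: le_trans zm_le _; rewrite ler_piMl // exprn_ile1.
have [_ Im_le _] := hrho_mle_ball D_ge0 zm_gt0 zm_near.
move: zm_le; rewrite /hrho ler_pdivrMr ?mulr_gt0 // => /le_trans; apply.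
have -> : D * (2 + D) * sg ^+ 2 * (1 - eta) ^+ m = (1 - eta) ^+ m * D * ((2 + D) * sg * sg).
  by rewrite /D; ring.
apply: ler_wpM2l; first exact: mulr_ge0.
by rewrite -/sg; apply: ler_wpM2r => //; exact: ltW.
Qed.

End MaximumLikelihood.

End ThreeNodes.

End Resolvent.

Theorem mainTheorem1 (R : realType) (n : nat) (x : 'I_n -> R) (th : R[i]) :
  (3 <= n)%N -> injective x -> is_mle x th ->
  (* (i) unique solution of z = Q z in H, equal to th *)
  ((exists z, inH z /\ z = Qmap x z) /\
   (forall z, inH z -> z = Qmap x z -> z = th)) /\
  (* (ii) th is a fixed point of Q *)
  Qmap x th = th /\
  (* (iii) convergence of the iterates, exponentially fast *)
  (forall z, inH z ->
     ((fun m => ComplexField.Normc.normc (iter m (Qmap x) z - th)) @ \oo --> (0 : R)) /\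
     exists C r : R, 0 < C /\ 0 < r < 1 /\
       forall m : nat, ComplexField.Normc.normc (iter m (Qmap x) z - th) <= C * r ^+ m).
Proof.
move=> n_gt2 x_inj th_mle; have n_gt0 : (0 < n)%N by apply: leq_trans n_gt2.
have th_fixed := Qmap_mle n_gt0 th_mle.
split; [split|split] => //.
- by exists th; split; [case: th_mle | rewrite th_fixed].
- by move=> z z_gt0 /esym; apply: Qmap_fixpoint_mle.
move=> z z_gt0.
have [B [B_ge0 [q q01 dist_le]]] := sqnormc_iter_Qmap_le n_gt0 n_gt2 x_inj th_mle z_gt0.
have [C [r [C_gt0 [r01 norm_le]]]] := sqrt_geometric_bound B_ge0 q01 dist_le.
split; last by exists C, r; split => //; split => // m; rewrite normc_sqnormc.
apply: (@cvg_geometric_bound _ _ C r) => [|m]; first by case/andP: r01 => /ltW -> ->.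
by rewrite normc_sqnormc sqrtr_ge0 norm_le.
Qed.
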